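(* There exist constants $c > 0$ and $n_0$ such that for every $n \ge n_0$ there exists a word $w$ of length $4n^2$ over an alphabet of $n$ symbols such that $TG(w)$ is a temporal path graph on $n$ vertices and every temporal walk in $TG(w)$ that visits all $n$ vertices has length at least $c n^2$ (i.e. exploring $TG(w)$ requires $\Omega(n^2)$ timesteps).
   Context: For a word $w$, $w[i]$ is its $i$-th letter, $w[i,j]$ the factor $w[i]\cdots w[j]$, $\mathrm{letters}(u)$ the set of symbols occurring in $u$, and $\pi_{\mathcal S}(w)$ the subsequence of $w$ of all occurrences of symbols in $\mathcal S$. Symbols $x,y$ alternate in $w$ if $\pi_{\{x,y\}}(w) \in \{(xy)^k, (xy)^kx, (yx)^k, (yx)^ky : k \ge 0\}$. $G(w)$ has one vertex $v_a$ per alphabet symbol $a$ and undirected edge $(v_x,v_y)$ iff $x\neq y$ alternate in $w$. Start points: $S_1=1$, and $S_i$ is the least index $j>S_{i-1}$ with $w[j] \in \mathrm{letters}(w[S_{i-1},j-1])$; $S_1<\dots<S_T$ are all start points. The $t$-th timestep factor is $w[S_t,S_{t+1}-1]$ ($t<T$) or $w[S_T,|w|]$ ($t=T$). $TG(w)=(V,E_1,\dots,E_T)$ with $E_t$ the set of edges $(v_x,v_y)$ of $G(w)$ with $x$ or $y$ occurring in the $t$-th timestep factor. A temporal path graph is such a $TG(w)$ whose underlying graph $(V,\bigcup_t E_t)$ is a path. A temporal walk is a sequence $(e_1,t_1),\dots,(e_k,t_k)$ with $e_i\in E_{t_i}$, the end point of $e_i$ equal to the start point of $e_{i+1}$, and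 $t_1<\dots<t_k$; it visits the endpoints of its edges and has length $t_k$. *)

(* Words are sequences over an eqType; positions are 0-indexed
   internally, timesteps are 1-indexed as in the paper. *)
From mathcomp Require Import all_boot all_order all_algebra.
Set Implicit Arguments. Unset Strict Implicit. Unset Printing Implicit Defensive.

Section Defs.
Variable T : eqType.

Definition alt_word (k : nat) (a b : T) : seq T := flatten (nseq k [:: a; b]).

Definition proj2 (x y : T) (w : seq T) : seq T :=
  [seq a <- w | (a == x) || (a == y)].

Definition alternate (w : seq T) (x y : T) : Prop :=
  exists k : nat,
    proj2 x y w = alt_word k x y \/ proj2 x y w = rcons (alt_word k x y) x \/
    proj2 x y w = alt_word k y x \/ proj2 x y w = rcons (alt_word k y x) y.

Definition G_edge (w : seq T) (x y : T) : Prop := x <> y /\ alternate w x y.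

(* Least (0-indexed) j > s, j < |w|, with w[j] in letters(w[s..j-1]). *)
Definition next_start (w : seq T) (s : nat) : option nat :=
  ohead [seq j <- iota s.+1 (size w - s.+1) |
          if onth w j is Some a then a \in take (j - s) (drop s w) else false].

Fixpoint starts_from (fuel : nat) (w : seq T) (s : nat) : seq nat :=
  s :: match fuel with
       | 0 => [::]
       | f.+1 => if next_start w s is Some j then starts_from f w j else [::]
       end.

Definition starts (w : seq T) : seq nat := starts_from (size w) w 0.

Definition n_timesteps (w : seq T) : nat := size (starts w).

(* S_i for 1 <= i <= T (0-indexed position); S_{T+1} := |w| *)
Definition start_pt (w : seq T) (i : nat) : nat := nth (size w) (starts w) i.-1.

Definition ts_factor (w : seq T) (t : nat) : seq T :=
  take (start_pt w t.+1 - start_pt w t) (drop (start_pt w t) w).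

Definition TG_edge (w : seq T) (t : nat) (x y : T) : Prop :=
  (1 <= t <= n_timesteps w)%N /\ G_edge w x y /\
  (x \in ts_factor w t \/ y \in ts_factor w t).

Definition underlying_edge (w : seq T) (x y : T) : Prop :=
  exists t : nat, TG_edge w t x y.

(* A temporal walk: a list of traversed edges ((u, v), t): edge (v_u, v_v)
   used at timestep t, traversed from u to v. *)
Definition temporal_walk (w : seq T) (W : seq (T * T * nat)) : Prop :=
  (forall e, e \in W -> TG_edge w e.2 e.1.1 e.1.2) /\
  (forall p, p \in zip W (behead W) -> p.1.1.2 = p.2.1.1) /\
  sorted ltn [seq e.2 | e <- W].

Definition walk_visits (W : seq (T * T * nat)) (v : T) : Prop :=
  v \in flatten [seq [:: e.1.1; e.1.2] | e <- W].

Definition walk_length (W : seq (T * T * nat)) : nat := last 0%N [seq e.2 | e <- W].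

End Defs.

Definition is_path_graph (n : nat) (E : 'I_n -> 'I_n -> Prop) : Prop :=
  exists s : seq 'I_n, size s = n /\ uniq s /\
    forall x y : 'I_n, E x y <->
      exists i : nat, (i.+1 < n)%N /\
        ((x = nth x s i /\ y = nth x s i.+1) \/ (y = nth x s i /\ x = nth x s i.+1)).

Definition temporal_path_graph (n : nat) (w : seq 'I_n) : Prop :=
  is_path_graph (underlying_edge w).

(* The word is  D ++ S ++ P.  The spine  S = 0 1 0 2 1 3 2 ... (n-1) (n-2) (n-1)
   contains a doubled letter in the projection onto any pair x, y with
   |x - y| >= 2, so G(w) is contained in the path 0 - 1 - ... - (n-1); the
   delay D and the padding P (repetitions of 0 1 ... (n-1)) are chosen so that
   every pair x, x+1 still alternates in the whole word.  The delay consists of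
   about n/4 zigzags over the letters >= n/2, hence has length Theta(n^2), and
   every 6 consecutive letters of D contain a repetition: each timestep starting
   inside D is at most 5 letters long, so D spans Omega(n^2) timesteps.  The
   only edge at vertex 0 is (0, 1), which exists at a timestep only if 0 or 1
   occurs in it; as D avoids both letters, visiting 0 takes Omega(n^2) steps. *)

From mathcomp Require Import all_boot all_order all_algebra zify.
Set Implicit Arguments. Unset Strict Implicit. Unset Printing Implicit Defensive.

Lemma not_uniq_take_leq (T : eqType) (s : seq T) m n :
  m <= n -> ~~ uniq (take m s) -> ~~ uniq (take n s).
Proof. by move=> le_mn; apply: contra; rewrite -(take_takel s le_mn); apply: take_uniq. Qed.

Lemma not_uniq_take_cons (T : eqType) (a : T) s n :
  ~~ uniq (take n s) -> ~~ uniq (take n.+1 (a :: s)).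
Proof. by rewrite /= negb_and => ->; rewrite orbT. Qed.

Lemma ohead_filter_iota_le (P : pred nat) a m z : P z -> a <= z < a + m ->
  exists2 h, ohead [seq j <- iota a m | P j] = Some h & h <= z.
Proof.
elim: m a => [|m IH] a Pz /andP [az zam]; first lia.
rewrite /= fun_if /=; case: ifP => Pa; first by exists a.
have [a_z | a_lt_z] : a = z \/ a < z by lia.
  by rewrite a_z Pz in Pa.
by apply: IH => //; lia.
Qed.

Lemma sorted_leq_last (s : seq nat) t : sorted ltn s -> t \in s -> t <= last 0 s.
Proof.
move=> /(sub_sorted ltnW) s_sorted t_in_s.
have lt_ts : index t s < size s by rewrite index_mem.
rewrite -(nth_index 0 t_in_s) -nth_last.
by apply: (sorted_leq_nth leq_trans leqnn) => //; rewrite ?inE;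
  case: (size s) lt_ts => //= m; lia.
Qed.

(** * Timesteps *)

Section StartPoints.
Variables (T : eqType) (w : seq T).

Lemma next_start_bounds s j : next_start w s = Some j -> s < j < size w.
Proof.
rewrite /next_start; case E: filter => [|h t] //= [<-].
by have := mem_head h t; rewrite -E mem_filter mem_iota => /andP [_]; lia.
Qed.

Lemma next_start_repeat s L : ~~ uniq (take L.+1 (drop s w)) ->
  exists2 j, next_start w s = Some j & j <= s + L.
Proof.
case E: (take L.+1 (drop s w)) => [|x0 u] //; rewrite -E.
case/(uniqPn x0) => i [j [lt_ij j_lt eq_ij]]; move: j_lt eq_ij.
rewrite size_take_min size_drop => j_lt; rewrite !nth_take ?nth_drop; try lia.
move=> eq_ij; suff [h -> h_le] : exists2 h, next_start w s = Some h & h <= s + j.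
  by exists h => //; lia.
apply: ohead_filter_iota_le; last lia.
rewrite (onthE _ (s + j)) (nth_map x0) -?eq_ij; last lia.
rewrite (_ : s + j - s = j); last lia.
by rewrite -nth_drop -(nth_take x0 lt_ij) mem_nth // size_take_min size_drop; lia.
Qed.

Lemma starts_from_cover f s p : size w <= (f + s).+1 -> s <= p < size w ->
  let st := starts_from f w s in
  exists2 i, i < size st & nth 0 st i <= p < nth (size w) st i.+1.
Proof.
elim: f s => [|f IH] s w_short p_in /=; first by exists 0 => //=; lia.
case E: (next_start w s) => [j|] /=; last by exists 0 => //=; lia.
have /andP [lt_sj _] := next_start_bounds E.
have [p_lt_j | j_le_p] := ltnP p j.
  by exists 0 => //=; case: f {IH w_short} => [|f] /=; lia.
by have [i ? ?] := IH j ltac:(lia) ltac:(lia); exists i.+1.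
Qed.

Lemma mem_ts_factor a : a \in w ->
  exists2 t, 1 <= t <= n_timesteps w & a \in ts_factor w t.
Proof.
move=> a_in_w; set p := index a w; have p_lt : p < size w by rewrite index_mem.
have [i i_lt /andP [S_le_p p_lt_S]] := @starts_from_cover (size w) 0 p ltac:(lia) ltac:(lia).
exists i.+1; first by rewrite /n_timesteps /starts; lia.
rewrite -(nth_index a a_in_w) /ts_factor /start_pt /= -/(starts w) -/p.
rewrite (set_nth_default (size w) 0 i_lt) in S_le_p.
set A := nth (size w) (starts w) i in S_le_p *; set B := nth _ _ i.+1 in p_lt_S *.
rewrite (_ : nth a w p = nth a (take (B - A) (drop A w)) (p - A)).
  by apply: mem_nth; rewrite size_take_min size_drop; lia.
by rewrite nth_take ?nth_drop; try congr nth; lia.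
Qed.

Lemma starts_from_le f s L M i :
  size w <= (f + s).+1 -> (forall p, p < M -> ~~ uniq (take L.+1 (drop p w))) ->
  s + L * i < M ->
  i < size (starts_from f w s) /\ nth 0 (starts_from f w s) i <= s + L * i.
Proof.
move=> + repeats; elim: f s i => [|f IH] s [|i] w_short lt_M /=; try by split => //; lia.
  have [j /next_start_bounds] := next_start_repeat (repeats s ltac:(lia)); lia.
have [j Ej j_le] := next_start_repeat (repeats s ltac:(lia)); rewrite Ej /=.
have /andP [lt_sj _] := next_start_bounds Ej.
have [] := IH j i ltac:(lia) ltac:(lia); lia.
Qed.

Lemma ts_factor_late M L t a :
  (forall p, p < M -> ~~ uniq (take L.+1 (drop p w))) ->
  a \notin take M w -> a \in ts_factor w t -> M <= L * t.
Proof.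
move=> repeats a_late; rewrite leqNgt; apply: contraTN => lt_M.
have [t_lt S_le] := @starts_from_le (size w) 0 L M t ltac:(lia) repeats ltac:(lia).
rewrite /ts_factor /start_pt /= -/(starts w) in t_lt S_le *.
rewrite (set_nth_default 0 (size w) t_lt).
set A := nth _ _ t.-1; set B := nth 0 _ t.
have [A_le_B | B_lt_A] := leqP A B; last by rewrite (_ : B - A = 0) ?take0 //; lia.
rewrite take_drop subnK // -(@take_takel _ B M w); last lia.
by apply: contra a_late => /mem_drop /mem_take.
Qed.

End StartPoints.

Lemma walk_length_ge (T : eqType) (w : seq T) W e :
  temporal_walk w W -> e \in W -> e.2 <= walk_length W.
Proof. by move=> [_ [_ W_sorted]] e_in; apply: sorted_leq_last W_sorted (map_f _ e_in). Qed.

(** * Alternation *)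

Section Alternation.
Variable T : eqType.
Implicit Types (x y : T) (w s : seq T).

Lemma alt_wordS k x y : alt_word k.+1 x y = x :: y :: alt_word k x y.
Proof. by []. Qed.

Lemma alt_word_cat k l x y : alt_word k x y ++ alt_word l x y = alt_word (k + l) x y.
Proof. by rewrite /alt_word -flatten_cat nseqD. Qed.

Lemma map_alt_word (S : eqType) (f : S -> T) k a b :
  map f (alt_word k a b) = alt_word k (f a) (f b).
Proof. by elim: k => //= k ->. Qed.

Lemma proj2_cons x y a s :
  proj2 x y (a :: s) = if (a == x) || (a == y) then a :: proj2 x y s else proj2 x y s.
Proof. by []. Qed.

Lemma proj2_cat x y s1 s2 : proj2 x y (s1 ++ s2) = proj2 x y s1 ++ proj2 x y s2.
Proof. exact: filter_cat. Qed.

Lemma proj2C x y s : proj2 x y s = proj2 y x s.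
Proof. by apply: eq_filter => a; rewrite orbC. Qed.

Lemma alternateC w x y : alternate w x y -> alternate w y x.
Proof. by rewrite /alternate proj2C => -[k]; exists k; tauto. Qed.

Lemma alternate_nseq_alt_word w x y (b c : bool) m :
  proj2 x y w = nseq b y ++ alt_word m x y ++ nseq c x -> alternate w x y.
Proof.
have cons_alt l : y :: alt_word l x y = rcons (alt_word l y x) y.
  by elim: l => // l IH; rewrite !alt_wordS /= IH.
have cons_rcons_alt l : y :: rcons (alt_word l x y) x = alt_word l.+1 y x.
  by elim: l => // l IH; rewrite !alt_wordS /= IH.
move=> E; rewrite /alternate E.
case: b c {E} => [] [] /=; rewrite ?cats0 ?cats1.
- by exists m.+1; right; right; left; rewrite cons_rcons_alt.
- by exists m; right; right; right; rewrite cons_alt.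
- by exists m; right; left.
- by exists m; left.
Qed.

Lemma sorted_rcons_alt_word k x y : x != y ->
  sorted [rel a b | a != b] (rcons (alt_word k x y) x).
Proof.
move=> neq_xy; elim: k => // k IH.
rewrite alt_wordS /= neq_xy.
by case: k IH => [|k]; rewrite ?alt_wordS /= (eq_sym y) neq_xy.
Qed.

Lemma alternate_no_double w x y s1 s2 : x != y -> alternate w x y ->
  proj2 x y w <> s1 ++ x :: x :: s2.
Proof.
move=> neq_xy [k forms] E.
suff : sorted [rel a b | a != b] (s1 ++ x :: x :: s2).
  by case/cat_sorted2 => _ /=; rewrite eqxx.
have sorted_alt (a b : T) : a != b -> sorted [rel a b | a != b] (alt_word k a b).
  by move=> neq_ab; have := sorted_rcons_alt_word k neq_ab; rewrite -cats1 => /cat_sorted2 [].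
have neq_yx : y != x by rewrite eq_sym.
by rewrite -E; case: forms => [|[|[|]]] ->;
  auto using sorted_alt, sorted_rcons_alt_word.
Qed.

Lemma alternate_map (S : eqType) (f : S -> T) (w : seq S) a b : injective f ->
  alternate (map f w) (f a) (f b) <-> alternate w a b.
Proof.
move=> f_inj; have mapE (s t : seq S) : map f s = map f t <-> s = t.
  by split=> [/(inj_map f_inj)|->].
have proj2_map : proj2 (f a) (f b) (map f w) = map f (proj2 a b w).
  by rewrite /proj2 filter_map; congr map; apply: eq_filter => c /=; rewrite !inj_eq.
rewrite /alternate proj2_map; split=> -[k forms]; exists k; move: forms;
  by rewrite -!(map_alt_word f) -!map_rcons !mapE.
Qed.

End Alternation.

(** * The slow word *)

Ltac decide_nat_tests := repeat match goal with
  | |- context [?a == ?b] =>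
      (rewrite (_ : (a == b) = true); [|lia]) || (rewrite (_ : (a == b) = false); [|lia])
  | |- context [?a <= ?b] =>
      (rewrite (_ : (a <= b) = true); [|lia]) || (rewrite (_ : (a <= b) = false); [|lia])
  end.

Fixpoint zigzag (d k : nat) : seq nat :=
  if d is d'.+1 then k.+1 :: k :: zigzag d' k.+1 else [:: k.+1; k; k.+1].

Lemma size_zigzag d k : size (zigzag d k) = 2 * d + 3.
Proof. by elim: d k => //= d IH k; rewrite IH; lia. Qed.

Lemma mem_zigzag d k z : (z \in zigzag d k) = (k <= z <= k + d + 1).
Proof.
by elim: d k => [|d IH] k /=; rewrite !inE ?IH; apply/idP/idP; lia.
Qed.

Lemma proj2_zigzag_adj d k x : x.+1 <= k + d + 1 ->
  proj2 x x.+1 (zigzag d k) =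
  if x.+1 < k then [::] else if x.+1 == k then [:: x.+1]
  else if x == k then [:: x.+1; x; x.+1] else alt_word 2 x x.+1.
Proof.
elim: d k => [|d IH] k x_le; rewrite [zigzag _ _]/= !proj2_cons ?IH; try lia;
  (have [lt|[e|[e|[e|lt]]]] : x.+1 < k \/ x.+1 = k \/ x = k \/ x = k.+1 \/ k.+1 < x by lia);
  subst; first [exfalso; lia | by decide_nat_tests].
Qed.

Lemma proj2_zigzag_far d k x y : k <= x -> x.+2 <= y <= k + d + 1 ->
  exists t, proj2 x y (zigzag d k) = nseq (k < x) x ++ x :: t.
Proof.
elim: d k => [|d IH] k le_kx /andP [lt_xy y_le]; first lia.
rewrite [zigzag _ _]/= !proj2_cons.
have [e|lt_kx] : x = k \/ k < x by lia.
  by subst; decide_nat_tests; eexists.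
have [t ->] := IH k.+1 ltac:(lia) ltac:(lia).
have [e|lt_Skx] : x = k.+1 \/ k.+1 < x by lia.
  by subst; decide_nat_tests; eexists.
by decide_nat_tests; eexists.
Qed.


Lemma zigzag_head_repeat d k s : ~~ uniq (take 4 (zigzag d k ++ s)).
Proof. by case: d => [|[|d]] /=; rewrite !inE !eqxx ?orbT ?andbF. Qed.

Lemma zigzag_window d k p s : p < size (zigzag d k) -> ~~ uniq (take 4 s) ->
  ~~ uniq (take 6 (drop p (zigzag d k ++ s))).
Proof.
have head_repeat d' k' : ~~ uniq (take 6 (zigzag d' k' ++ s)).
  exact: not_uniq_take_leq _ (zigzag_head_repeat _ _ _).
move=> + s_repeat; rewrite size_zigzag.
elim: d k p => [|d IH] k [|[|p]] p_lt; rewrite ?drop0 ?head_repeat // [drop _ _]/=.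
- by do 2 apply: not_uniq_take_cons.
- by case: p p_lt => // _; apply/not_uniq_take_cons/(not_uniq_take_leq _ s_repeat).
- by case: d {IH p_lt} => [|[|d]] /=; rewrite !inE !eqxx ?orbT ?andbF.
- by apply: IH; lia.
Qed.

Fixpoint delay (n l : nat) : seq nat :=
  if l is l'.+1 then delay n l' ++ zigzag (2 * l') (n - 2 - 2 * l') else [::].

Lemma size_delay n l : size (delay n l) = 2 * l ^ 2 + l.
Proof. by elim: l => //= l IH; rewrite size_cat IH size_zigzag; lia. Qed.

Lemma mem_delay n l z : 2 * l <= n - 2 -> z \in delay n l -> n - 2 * l <= z < n.
Proof.
elim: l => //= l IH l_le; rewrite mem_cat mem_zigzag => /orP [/IH|]; lia.
Qed.

Lemma delay_window n l p s : p < size (delay n l) -> ~~ uniq (take 4 s) ->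
  ~~ uniq (take 6 (drop p (delay n l ++ s))).
Proof.
elim: l s p => //= l IH s p; rewrite size_cat -catA => p_lt s_repeat.
have [p_small|p_large] := ltnP p (size (delay n l)).
  exact: IH (zigzag_head_repeat _ _ _).
by rewrite drop_cat ltnNge p_large /=; apply: zigzag_window => //; lia.
Qed.

(* Each block ends with the letter [n - 1] and starts two letters lower than the
   previous one, so on an adjacent pair [x, x.+1] the blocks glue into an
   alternating sequence. *)
Lemma proj2_delay_adj n l x : x.+1 < n -> 2 * l <= n - 2 ->
  exists m, proj2 x x.+1 (delay n l) =
    if x.+1 < n - 2 * l then [::] else x.+1 :: alt_word m x x.+1.
Proof.
move=> lt_xn; elim: l => [|l IH] l_le; first by exists 0; rewrite subn0 lt_xn.
have [m Em] := IH ltac:(lia).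
rewrite [delay n l.+1]/= proj2_cat Em proj2_zigzag_adj; last lia.
set k := n - 2 - 2 * l.
have [lt|[e|[e|lt]]] : x.+1 < k \/ x.+1 = k \/ x = k \/ k < x by lia.
- by exists m; decide_nat_tests.
- by exists 0; decide_nat_tests; rewrite e.
- by exists 1; decide_nat_tests; rewrite e.
- by exists (m + 2); decide_nat_tests; rewrite -alt_word_cat.
Qed.

Definition spine n := 0 :: zigzag (n - 2) 0.

Lemma size_spine n : 2 <= n -> size (spine n) = 2 * n.
Proof. by rewrite /= size_zigzag; lia. Qed.

Lemma mem_spine n z : 2 <= n -> (z \in spine n) = (z < n).
Proof. by rewrite inE mem_zigzag; case: z => [|z] /=; lia. Qed.

Lemma proj2_spine_adj n x : x.+1 < n -> proj2 x x.+1 (spine n) = alt_word 2 x x.+1.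
Proof.
move=> lt_xn; rewrite proj2_cons proj2_zigzag_adj; last lia.
by case: x lt_xn => [|x] lt_xn; decide_nat_tests.
Qed.

Lemma proj2_spine_far n x y : x.+2 <= y < n -> exists t, proj2 x y (spine n) = x :: x :: t.
Proof.
move=> /andP [lt_xy lt_yn]; rewrite proj2_cons.
have [t Et] := @proj2_zigzag_far (n - 2) 0 x y ltac:(lia) ltac:(lia).
by case: x lt_xy Et => [|x] lt_xy ->; decide_nat_tests; exists t.
Qed.

Lemma spine_head_repeat n s : ~~ uniq (take 4 (spine n ++ s)).
Proof. by rewrite /spine; case: (n - 2) => [|[|d]]. Qed.

Definition padding n r := flatten (nseq (r %/ n) (iota 0 n)) ++ iota 0 (r %% n).

Lemma size_padding n r : size (padding n r) = r.
Proof.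
rewrite size_cat size_flatten /shape map_nseq sumn_nseq size_iota size_iota.
by rewrite mulnC -divn_eq.
Qed.

Lemma mem_padding n r z : 0 < n -> z \in padding n r -> z < n.
Proof.
move=> n_gt0; have lt_rn : r %% n < n by rewrite ltn_mod.
rewrite mem_cat mem_iota => /orP [/flattenP [s]|]; last lia.
by rewrite mem_nseq => /andP [_ /eqP ->]; rewrite mem_iota.
Qed.

Lemma proj2_iota x y a l : x < y ->
  proj2 x y (iota a l) = [seq z <- [:: x; y] | a <= z < a + l].
Proof.
move=> lt_xy; apply: (irr_sorted_eq ltn_trans ltnn); rewrite /proj2.
- by apply: sorted_filter; [exact: ltn_trans | exact: iota_ltn_sorted].
- by apply: sorted_filter; [exact: ltn_trans | rewrite /= lt_xy].
- by move=> z; rewrite !mem_filter mem_iota !inE andbC.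
Qed.

Lemma proj2_padding_adj n r x : x.+1 < n ->
  exists m (c : bool), proj2 x x.+1 (padding n r) = alt_word m x x.+1 ++ nseq c x.
Proof.
move=> lt_xn; have lt_rn : r %% n < n by rewrite ltn_mod; lia.
rewrite proj2_cat proj2_iota //=.
have -> : proj2 x x.+1 (flatten (nseq (r %/ n) (iota 0 n))) = alt_word (r %/ n) x x.+1.
  rewrite [LHS]filter_flatten map_nseq -/(proj2 _ _ _) proj2_iota //=.
  by decide_nat_tests.
have [le|[e|lt]] : r %% n <= x \/ r %% n = x.+1 \/ x.+1 < r %% n by lia.
- by exists (r %/ n), false; decide_nat_tests.
- by exists (r %/ n), true; decide_nat_tests.
- exists (r %/ n).+1, false; decide_nat_tests.
  by rewrite cats0 -(addn1 (r %/ n)) -alt_word_cat.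
Qed.

Definition slow_prefix n := delay n (n %/ 4).

Definition slow_word n :=
  slow_prefix n ++ spine n ++ padding n (4 * n ^ 2 - size (slow_prefix n) - 2 * n).

Section SlowWord.
Variable n : nat.
Hypothesis n_ge4 : 4 <= n.

Lemma size_slow_prefix : size (slow_prefix n) = 2 * (n %/ 4) ^ 2 + n %/ 4.
Proof. exact: size_delay. Qed.

Lemma size_slow_word : size (slow_word n) = 4 * n ^ 2.
Proof.
rewrite 2!size_cat size_padding size_spine ?size_slow_prefix; last lia.
by have := leq_divM n 4; move: (n %/ 4) => q; nia.
Qed.

Lemma mem_slow_prefix z : z \in slow_prefix n -> 2 <= z < n.
Proof. by move/mem_delay; have := leq_divM n 4; lia. Qed.

Lemma mem_slow_word z : (z \in slow_word n) = (z < n).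
Proof.
rewrite 2!mem_cat mem_spine; last lia.
apply/idP/idP => [/or3P [/mem_slow_prefix|//|/mem_padding]|->]; rewrite ?orbT //; lia.
Qed.

Lemma slow_word_window p : p < size (slow_prefix n) -> ~~ uniq (take 6 (drop p (slow_word n))).
Proof. by move=> p_lt; apply: delay_window p_lt (spine_head_repeat _ _). Qed.

Lemma alternate_slow_word_adj x : x.+1 < n -> alternate (slow_word n) x x.+1.
Proof.
move=> lt_xn; have q_le := leq_divM n 4.
have [m Em] := @proj2_delay_adj n (n %/ 4) x lt_xn ltac:(lia).
have [m' [c Em']] := proj2_padding_adj (4 * n ^ 2 - size (slow_prefix n) - 2 * n) lt_xn.
set b := ~~ (x.+1 < n - 2 * (n %/ 4)).
have {Em} Em : proj2 x x.+1 (slow_prefix n) = nseq b x.+1 ++ alt_word (b * m) x x.+1.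
  by rewrite Em /b; case: ifP => _; rewrite ?mul0n ?mul1n.
apply: (@alternate_nseq_alt_word _ _ _ _ b c (b * m + 2 + m')).
by rewrite 2!proj2_cat Em proj2_spine_adj // Em' -!alt_word_cat !catA.
Qed.

Lemma not_alternate_slow_word_far x y : x.+2 <= y < n -> ~ alternate (slow_word n) x y.
Proof.
move=> far alt_xy; have [t Et] := proj2_spine_far far.
have neq_xy : x != y by apply/eqP; lia.
apply: (alternate_no_double neq_xy alt_xy).
by rewrite /slow_word 2!proj2_cat Et.
Qed.

Lemma alternate_slow_word x y : x < n -> y < n -> x != y ->
  alternate (slow_word n) x y <-> y = x.+1 \/ x = y.+1.
Proof.
move=> lt_xn lt_yn neq_xy.
split=> [alt_xy|[e|e]]; subst.
- have near a b : b < n -> alternate (slow_word n) a b -> b <= a.+1.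
    move=> lt_bn alt_ab; rewrite leqNgt; apply/negP => lt_ab.
    by apply: (@not_alternate_slow_word_far a b _ alt_ab); lia.
  have := near x y lt_yn alt_xy; have := near y x lt_xn (alternateC alt_xy); lia.
- exact: alternate_slow_word_adj.
- exact/alternateC/alternate_slow_word_adj.
Qed.
End SlowWord.

Lemma sq_le_size_slow_prefix n : 8 <= n -> 5 * n ^ 2 <= 64 * size (slow_prefix n).
Proof.
rewrite size_delay {1 2}(divn_eq n 4) => n_ge8.
have := ltn_pmod n (isT : 0 < 4); move: (n %/ 4) (n %% 4) n_ge8 => q r; nia.
Qed.

Definition slow_word_ord n : seq 'I_n.+1 := map inord (slow_word n.+1).

Section SlowWordOrd.
Variable n : nat.
Hypothesis n_ge3 : 3 <= n.

Lemma size_slow_word_ord : size (slow_word_ord n) = 4 * n.+1 ^ 2.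
Proof. by rewrite size_map size_slow_word. Qed.

Lemma map_val_slow_word_ord : map val (slow_word_ord n) = slow_word n.+1.
Proof.
rewrite -map_comp -[RHS]map_id; apply/eq_in_map => z.
by rewrite mem_slow_word //= => lt_zn; apply: inordK.
Qed.

Lemma mem_slow_word_ord (x : 'I_n.+1) : x \in slow_word_ord n.
Proof. by rewrite -(mem_map val_inj) map_val_slow_word_ord mem_slow_word ?ltn_ord. Qed.

Lemma G_edge_slow_word_ord (x y : 'I_n.+1) :
  G_edge (slow_word_ord n) x y <-> y = x.+1 :> nat \/ x = y.+1 :> nat.
Proof.
rewrite /G_edge -(alternate_map _ _ _ val_inj) map_val_slow_word_ord.
split=> [[neq_xy alt_xy] | adj].
- have neq : (x : nat) != y by apply/eqP => /val_inj.
  exact/(alternate_slow_word _ (ltn_ord x) (ltn_ord y) neq).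
- have neq : (x : nat) != y by apply/eqP; case: adj; lia.
  split; first by move=> e; rewrite e eqxx in neq.
  exact/(alternate_slow_word _ (ltn_ord x) (ltn_ord y) neq).
Qed.

Lemma temporal_path_graph_slow_word : temporal_path_graph (slow_word_ord n).
Proof.
exists (enum 'I_n.+1); rewrite size_enum_ord enum_uniq; split=> //; split=> // x y.
have nth_enum x0 i : i < n.+1 -> nth x0 (enum 'I_n.+1) i = i :> nat.
  by move=> ?; rewrite nth_enum_ord.
have [lt_x lt_y] := (ltn_ord x, ltn_ord y).
split=> [[t [_ [/G_edge_slow_word_ord [] e _]]] | [i [lt_in adj]]].
- by exists x; split; [lia | left; split; apply: val_inj; rewrite /= !nth_enum //; lia].
- by exists y; split; [lia | right; split; apply: val_inj; rewrite /= !nth_enum //; lia].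
have [t t_range x_in] := mem_ts_factor (mem_slow_word_ord x).
exists t; split=> //; split; last by left.
by apply/G_edge_slow_word_ord; case: adj => [[-> ->] | [-> ->]]; rewrite !nth_enum //; lia.
Qed.

Lemma slow_word_ord_window p : p < size (slow_prefix n.+1) ->
  ~~ uniq (take 6 (drop p (slow_word_ord n))).
Proof.
move=> p_lt; rewrite /slow_word_ord -map_drop -map_take.
exact: contra (@map_uniq _ _ inord _) (slow_word_window p_lt).
Qed.

Lemma slow_prefix_late (a : 'I_n.+1) : a <= 1 ->
  a \notin take (size (slow_prefix n.+1)) (slow_word_ord n).
Proof.
move=> a_le1; rewrite -(mem_map val_inj) map_take map_val_slow_word_ord take_size_cat //.
by apply/negP => /mem_slow_prefix /=; lia.
Qed.

Lemma slow_word_exploration_time W : temporal_walk (slow_word_ord n) W ->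
  (forall v, walk_visits W v) -> size (slow_prefix n.+1) <= 5 * walk_length W.
Proof.
move=> walk visits; have /flatten_mapP [e e_in end0] := visits ord0.
have [_ [/G_edge_slow_word_ord adj in_factor]] := walk.1 e e_in.
have ends_le1 : e.1.1 <= 1 /\ e.1.2 <= 1.
  have : e.1.1 = 0 :> nat \/ e.1.2 = 0 :> nat.
    by move: end0; rewrite !inE => /orP [] /eqP <-; [left | right].
  by case: adj; lia.
apply: leq_trans (leq_mul (leqnn 5) (walk_length_ge walk e_in)).
case: in_factor => a_in; apply: ts_factor_late a_in;
  by [exact: slow_word_ord_window | apply: slow_prefix_late; case: ends_le1].
Qed.

End SlowWordOrd.

Import GRing.Theory Num.Theory.

Theorem theorem17 :
  exists c : rat, (0 < c)%R /\
  exists n0 : nat, forall n : nat, (n0 <= n)%N ->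
    exists w : seq 'I_n,
      size w = (4 * n ^ 2)%N /\ temporal_path_graph w /\
      forall W : seq ('I_n * 'I_n * nat),
        temporal_walk w W -> (forall v : 'I_n, walk_visits W v) ->
        (c * (n ^ 2)%:R <= (walk_length W)%:R)%R.
Proof.
exists (64%:R)^-1%R; split; first by rewrite invr_gt0 ltr0n.
exists 8 => -[|n] // n_ge8; exists (slow_word_ord n).
have n_ge3 : 3 <= n by lia.
split; first exact: size_slow_word_ord.
split; first exact: temporal_path_graph_slow_word.
move=> W walk visits; rewrite mulrC ler_pdivrMr ?ltr0n // -natrM ler_nat.
have := sq_le_size_slow_prefix n_ge8.
have := slow_word_exploration_time n_ge3 walk visits; lia.
Qed.
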